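(* Let $\Omega\subseteq\mathbb{R}^n$ be open, $U\in\mathcal{G}_c(\Omega)$, and let $\Gamma$ be a closed cone contained in the complement of $\Sigma_g(U)$. Let $u$ be a compactly supported representative of $U$. Then there exists $N$ such that for every $p\in\mathbb{N}_0$ there exists $M\in\mathbb{N}_0$ such that for every $\phi\in\mathcal{A}_M(\mathbb{R}^n)$ there exist $c>0$ and $\varepsilon_0>0$ with $$|\mathcal{F}(u(\phi_\varepsilon,\cdot))(\xi)|\le c\,\varepsilon^{-N}(1+|\xi|)^{-p}\qquad(\xi\in\Gamma,\ 0<\varepsilon<\varepsilon_0).$$
   Context: $\mathcal{A}_0(\mathbb{R})$ is the set of test functions on $\mathbb{R}$ with integral $1$; for $q\ge1$, $\mathcal{A}_q(\mathbb{R})$ consists of those $\phi\in\mathcal{A}_0(\mathbb{R})$ with $\int x^j\phi(x)\,dx=0$ for $1\le j\le q$; $\mathcal{A}_q(\mathbb{R}^n)$ is the set of tensor products $\phi\otimes\cdots\otimes\phi$ ($n$ factors) with $\phi\in\mathcal{A}_q(\mathbb{R})$. For $\phi\in\mathcal{D}(\mathbb{R}^n)$, $\phi_\varepsilon(x)=\varepsilon^{-n}\phi(x/\varepsilon)$. $\mathcal{E}_M(\Omega)$ is the set of maps $R:\mathcal{A}_0(\mathbb{R}^n)\times\Omega\to\mathbb{C}$, smooth in $x$, such that for all compact $K\subset\Omega$ and all $\alpha$ there is $N$ such that for all $\phi\in\mathcal{A}_N$ there are $c,\eta>0$ with $\sup_{x\in K}|\partial^\alpha R(\phi_\varepsilon,x)|\le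 c\varepsilon^{-N}$ for $0<\varepsilon<\eta$. $\mathcal{N}(\Omega)$ is the set of $R\in\mathcal{E}_M(\Omega)$ such that for all $K,\alpha$ and all $q\in\mathbb{N}$ there is $p$ such that for all $\phi\in\mathcal{A}_p$ there are $c,\eta>0$ with $\sup_{x\in K}|\partial^\alpha R(\phi_\varepsilon,x)|\le c\varepsilon^{q}$ for $0<\varepsilon<\eta$. The Colombeau algebra is $\mathcal{G}(\Omega)=\mathcal{E}_M(\Omega)/\mathcal{N}(\Omega)$; $\mathcal{G}_c(\Omega)$ is the subalgebra of compactly supported elements, which have representatives $u$ with $u(\phi,\cdot)$ supported in a fixed compact set. For $U\in\mathcal{G}_c$ with such a representative $u$, $\Sigma_g(U)\subseteq\mathbb{R}^n\setminus0$ is the complement of the set of $\xi_0\ne0$ possessing an open conic neighborhood $\Gamma_0$ such that: there is $N$ such that for all $p\in\mathbb{N}_0$ there is $M$ such that for all $\phi\in\mathcal{A}_M$ there are $c,\eta>0$ with $|\mathcal{F}(u(\phi_\varepsilon,\cdot))(\xi)|\le c\varepsilon^{-N}(1+|\xi|)^{-p}$ for $\xi\in\Gamma_0$, $0<\varepsilon<\eta$ (this is independent of the choice of representative). $\mathcal{F}$ denotes the Fourier transform. *)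

From HB Require Import structures.
From mathcomp Require Import all_boot all_order all_algebra.
From mathcomp Require Import all_classical all_reals all_analysis.
From mathcomp Require Export complex.

Set Implicit Arguments.
Unset Strict Implicit.
Unset Printing Implicit Defensive.

Import Order.TTheory GRing.Theory Num.Theory.
Import numFieldTopology.Exports numFieldNormedType.Exports.
Local Open Scope classical_set_scope.
Local Open Scope ring_scope.

Section ColombeauDefs.
Context {R : realType}.
Local Notation C := (R[i]).

Definition cabs (z : C) : R :=
  Num.sqrt (complex.Re z ^+ 2 + complex.Im z ^+ 2).

Definition rint (f : R -> R) : R := Rintegral lebesgue_measure setT f.
Definition cint (f : R -> C) : C :=
  (rint (fun x => complex.Re (f x)) +i* rint (fun x => complex.Im (f x)))%C.

Definition smooth1 (g : R -> R) : Prop :=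
  forall (k : nat) (x : R), derivable (derive1n k g) x 1.

Definition test_fun1 (phi : R -> C) : Prop :=
  smooth1 (fun x => complex.Re (phi x)) /\ smooth1 (fun x => complex.Im (phi x)) /\
  exists L : R, forall x : R, L < `|x| -> phi x = 0.

Definition A1 (q : nat) (phi : R -> C) : Prop :=
  test_fun1 phi /\ cint phi = 1 /\
  forall j : nat, (1 <= j <= q)%N ->
    cint (fun x => ((x ^+ j)%:C)%C * phi x) = 0.

Definition tensor (n : nat) (phi : R -> C) : 'rV[R]_n -> C :=
  fun x => \prod_(i < n) phi (x ord0 i).

Definition An (n q : nat) (Phi : 'rV[R]_n -> C) : Prop :=
  exists phi : R -> C, A1 q phi /\ Phi = tensor (n:=n) phi.
Arguments An : clear implicits.

Definition scale_eps (n : nat) (Phi : 'rV[R]_n -> C) (eps : R) : 'rV[R]_n -> C :=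
  fun x => ((eps ^- n)%:C)%C * Phi (eps^-1 *: x).

Definition dotp (n : nat) (x y : 'rV[R]_n) : R := \sum_(i < n) x ord0 i * y ord0 i.
Definition enorm (n : nat) (x : 'rV[R]_n) : R := Num.sqrt (dotp x x).

Definition pder (n : nat) (i : 'I_n) (f : 'rV[R]_n -> R) : 'rV[R]_n -> R :=
  fun x => derive f x (delta_mx 0 i).

Fixpoint dlist (n : nat) (l : seq 'I_n) (f : 'rV[R]_n -> R) : 'rV[R]_n -> R :=
  match l with
  | [::] => f
  | i :: l' => pder i (dlist l' f)
  end.

Definition dmulti (n : nat) (alpha : 'I_n -> nat) (f : 'rV[R]_n -> R)
  : 'rV[R]_n -> R :=
  foldr (fun i g => iter (alpha i) (pder i) g) f (enum 'I_n).

Definition cdmulti (n : nat) (alpha : 'I_n -> nat) (f : 'rV[R]_n -> C)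
  : 'rV[R]_n -> C :=
  fun x => (dmulti alpha (fun y => complex.Re (f y)) x +i*
            dmulti alpha (fun y => complex.Im (f y)) x)%C.

Definition rsmooth_on (n : nat) (Om : set 'rV[R]_n) (f : 'rV[R]_n -> R) : Prop :=
  forall (l : seq 'I_n) (x : 'rV[R]_n), Om x ->
    {for x, continuous (dlist l f)} /\
    forall i : 'I_n, derivable (dlist l f) x (delta_mx 0 i).

Definition csmooth_on (n : nat) (Om : set 'rV[R]_n) (f : 'rV[R]_n -> C) : Prop :=
  rsmooth_on Om (fun x => complex.Re (f x)) /\ rsmooth_on Om (fun x => complex.Im (f x)).

(* A map R : A_0(R^n) x Om -> C is encoded as a function
   ('rV_n -> C) -> 'rV_n -> C; only its values on A_0(R^n) x Om matter. *)
Definition moderate (n : nat) (Om : set 'rV[R]_n)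
    (u : ('rV[R]_n -> C) -> 'rV[R]_n -> C) : Prop :=
  (forall Phi, An n 0 Phi -> csmooth_on Om (u Phi)) /\
  forall K : set 'rV[R]_n, compact K -> K `<=` Om ->
  forall alpha : 'I_n -> nat, exists N : nat,
  forall Phi, An n N Phi ->
  exists c eta : R, 0 < c /\ 0 < eta /\
  forall eps : R, 0 < eps < eta -> forall x, K x ->
    cabs (cdmulti alpha (u (scale_eps Phi eps)) x) <= c * eps ^- N.

Definition compactly_supported (n : nat) (Om : set 'rV[R]_n)
    (u : ('rV[R]_n -> C) -> 'rV[R]_n -> C) : Prop :=
  exists K : set 'rV[R]_n, compact K /\ K `<=` Om /\
  forall Phi, An n 0 Phi -> forall x, Om x -> ~ K x -> u Phi x = 0.

Fixpoint intn (n : nat) : ('rV[R]_n -> R) -> R :=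
  match n return ('rV[R]_n -> R) -> R with
  | 0 => fun f => f 0
  | n'.+1 => fun f =>
      rint (fun t => intn (fun y : 'rV[R]_n' => f (row_mx (\row_(j < 1) t) y)))
  end.

Definition cexpi (t : R) : C := (cos t +i* sin t)%C.

Definition FT (n : nat) (f : 'rV[R]_n -> C) (xi : 'rV[R]_n) : C :=
  let g := fun x => cexpi (- dotp x xi) * f x in
  (intn (fun x => complex.Re (g x)) +i* intn (fun x => complex.Im (g x)))%C.

Definition ext0 (n : nat) (Om : set 'rV[R]_n) (f : 'rV[R]_n -> C) : 'rV[R]_n -> C :=
  fun x => if x \in Om then f x else 0.

Definition is_cone (n : nat) (G : set 'rV[R]_n) : Prop :=
  forall (xi : 'rV[R]_n) (lam : R), G xi -> 0 < lam -> G (lam *: xi).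

Definition micro_estimate (n : nat) (Om : set 'rV[R]_n)
    (u : ('rV[R]_n -> C) -> 'rV[R]_n -> C) (G : set 'rV[R]_n) : Prop :=
  exists N : nat, forall p : nat, exists M : nat,
  forall Phi, An n M Phi ->
  exists c eta : R, 0 < c /\ 0 < eta /\
  forall xi : 'rV[R]_n, G xi -> forall eps : R, 0 < eps < eta ->
    cabs (FT (ext0 Om (u (scale_eps Phi eps))) xi)
      <= c * eps ^- N * (1 + enorm xi) ^- p.

(* generalized wave front set Sigma_g(U), computed with the compactly
   supported representative u *)
Definition SigmaG (n : nat) (Om : set 'rV[R]_n)
    (u : ('rV[R]_n -> C) -> 'rV[R]_n -> C) : set 'rV[R]_n :=
  [set xi0 | xi0 != 0 /\
     ~ (exists G0 : set 'rV[R]_n,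
          open G0 /\ is_cone G0 /\ G0 xi0 /\ micro_estimate Om u G0)].

End ColombeauDefs.

Arguments An {R} n q Phi.

From HB Require Import structures.
From mathcomp Require Import all_boot all_order all_algebra.
From mathcomp Require Import all_classical all_reals all_analysis.
From mathcomp Require Import complex.
From mathcomp Require Import lra ring.
Import Order.TTheory GRing.Theory Num.Theory.
Import numFieldTopology.Exports numFieldNormedType.Exports.
Local Open Scope classical_set_scope.
Local Open Scope ring_scope.

(* Away from the origin it suffices to treat the directions Gam `&` [set |xi| = 1],
   a compact set because Gam is closed off 0.  Each direction has an open conic
   neighbourhood carrying the estimate; finitely many cover, and the estimate
   survives finite unions (largest N and M, sum of the constants, smallest
   eps0).  The union of these cones is a cone, hence contains Gam minus 0.
   At xi = 0 the Fourier transform is the integral of u(phi_eps, .): phi_eps is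
   again in A_0, so this function is supported in a fixed compact set, where
   moderateness bounds it by c eps^-N; the integral is then at most that bound
   times the volume of a box. *)

Set Implicit Arguments.
Unset Strict Implicit.
Unset Printing Implicit Defensive.

Section micro_estimate_lattice.
Context {R : realType} (n : nat) (Om : set 'rV[R]_n).
Variable u : ('rV[R]_n -> R[i]) -> 'rV[R]_n -> R[i].

Lemma A1_le (p q : nat) (phi : R -> R[i]) : (p <= q)%N -> A1 q phi -> A1 p phi.
Proof.
move=> pq [t [c h]]; split=> //; split=> // j /andP[j1 jp].
by apply: h; rewrite j1 (leq_trans jp pq).
Qed.

Lemma An_le (p q : nat) (Phi : 'rV[R]_n -> R[i]) : (p <= q)%N -> An n q Phi -> An n p Phi.
Proof. by move=> pq [phi [hphi ->]]; exists phi; split=> //; apply: A1_le hphi. Qed.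

Lemma ler_micro_bound (c c' eps w : R) (N N' : nat) :
  0 < c <= c' -> (N <= N')%N -> 0 < eps <= 1 -> 0 <= w ->
  c * eps ^- N * w <= c' * eps ^- N' * w.
Proof.
move=> /andP[c0 cc'] NN' /andP[e0 e1] w0; apply: ler_wpM2r => //.
apply: ler_pM => //; first exact: ltW.
  by rewrite invr_ge0 exprn_ge0 // ltW.
rewrite -!exprVn; apply: ler_weXn2l => //.
by rewrite invr_ge1 // unitfE gt_eqF.
Qed.

Lemma micro_estimate_sub (G1 G2 : set 'rV[R]_n) :
  G1 `<=` G2 -> micro_estimate Om u G2 -> micro_estimate Om u G1.
Proof.
move=> G12 [N hN]; exists N => p; have [M hM] := hN p; exists M => Phi hPhi.
have [c [eta [c0 [eta0 H]]]] := hM Phi hPhi.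
by exists c, eta; do 2 split=> //; move=> xi /G12; apply: H.
Qed.

Lemma micro_estimate_set0 : micro_estimate Om u set0.
Proof. by exists 0%N => p; exists 0%N => Phi _; exists 1, 1. Qed.

Lemma micro_estimate_setU (G1 G2 : set 'rV[R]_n) :
  micro_estimate Om u G1 -> micro_estimate Om u G2 ->
  micro_estimate Om u (G1 `|` G2).
Proof.
move=> [N1 h1] [N2 h2]; exists (maxn N1 N2) => p.
have [M1 hM1] := h1 p; have [M2 hM2] := h2 p.
exists (maxn M1 M2) => Phi hPhi.
have [c1 [e1 [c10 [e10 H1]]]] := hM1 Phi (An_le (leq_maxl _ _) hPhi).
have [c2 [e2 [c20 [e20 H2]]]] := hM2 Phi (An_le (leq_maxr _ _) hPhi).
exists (c1 + c2), (Num.min 1 (Num.min e1 e2)).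
split; first by rewrite addr_gt0.
split; first by rewrite !lt_min ltr01 e10 e20.
move=> xi Gxi eps /andP[eps0]; rewrite !lt_min => /and3P[eps1 epse1 epse2].
have w0 : 0 <= (1 + enorm xi) ^- p.
  by rewrite invr_ge0 exprn_ge0 // addr_ge0 // sqrtr_ge0.
have eps01 : 0 < eps <= 1 by rewrite eps0 ltW.
case: Gxi => [G1xi|G2xi].
- apply: le_trans (H1 xi G1xi eps _) _; first by rewrite eps0.
  by apply: ler_micro_bound => //; rewrite ?c10 ?lerDl ?ltW ?leq_maxl.
- apply: le_trans (H2 xi G2xi eps _) _; first by rewrite eps0.
  by apply: ler_micro_bound => //; rewrite ?c20 ?lerDr ?ltW ?leq_maxr.
Qed.

Lemma micro_estimate_bigcup (s : seq (set 'rV[R]_n)) :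
  (forall G, G \in s -> micro_estimate Om u G) ->
  micro_estimate Om u [set x | exists2 G, G \in s & G x].
Proof.
elim: s => [|G s IH] hs.
  by apply: micro_estimate_sub micro_estimate_set0 => x [].
apply: micro_estimate_sub (micro_estimate_setU (hs G (mem_head _ _)) (IH _)).
  by move=> x [G' /[1!inE] /predU1P[->|G's] G'x]; [left|right; exists G'].
by move=> G' G's; apply: hs; rewrite inE G's orbT.
Qed.

End micro_estimate_lattice.

Section dilation.
Context {R : realType}.
Local Notation mu := (@lebesgue_measure R).

Lemma derivable_mulr (b x : R) :
  derivable (fun y : R => b * y) x 1 /\ derive1 (fun y : R => b * y) x = b.
Proof.
have did := @derivable_id _ R^o x 1.
split; first exact: (derivableZ (k := b) did).
by rewrite derive1E (@deriveZ _ R^o R^o id b x 1 did) derive_id scaler1.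
Qed.

Lemma derivable_dilate (h : R -> R) (a b x : R) : derivable h (b * x) 1 ->
  derivable (fun y => a * h (b * y)) x 1 /\
  derive1 (fun y => a * h (b * y)) x = a * b * derive1 h (b * x).
Proof.
move=> dh; have [dm dm'] := derivable_mulr b x.
have dc : derivable (h \o (fun y => b * y)) x 1.
  apply/derivable1_diffP/differentiable_comp; exact/derivable1_diffP.
split; first exact: (derivableZ (k := a) dc).
rewrite derive1E (@deriveZ _ R^o R^o _ a x 1 dc) -derive1E.
by rewrite (derive1_comp dm dh) dm' [_ *: _]mulrA mulrAC.
Qed.

Lemma derive1n_dilate (g : R -> R) (a b : R) (k : nat) : smooth1 g ->
  derive1n k (fun y => a * g (b * y)) = (fun y => a * b ^+ k * derive1n k g (b * y)).
Proof.
move=> sg; elim: k => [|k IH].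
  by rewrite !derive1n0; apply/funext => y; rewrite expr0 mulr1.
rewrite derive1nS IH; apply/funext => y.
have [_ ->] := derivable_dilate (a * b ^+ k) (sg k (b * y)).
by rewrite derive1nS exprSr mulrA.
Qed.

Lemma smooth1_dilate (g : R -> R) (a b : R) : smooth1 g -> smooth1 (fun y => a * g (b * y)).
Proof.
by move=> sg k x; rewrite derive1n_dilate //; exact: (derivable_dilate _ (sg k (b * x))).1.
Qed.

Lemma smooth1_continuous (g : R -> R) : smooth1 g -> continuous g.
Proof.
move=> sg x; have dg : derivable g x 1 by have := sg 0%N x; rewrite derive1n0.
exact/differentiable_continuous/derivable1_diffP.
Qed.

Lemma integralT_itv_supp (f : R -> R) (L : R) : (forall x, L < `|x| -> f x = 0) ->
  (\int[mu]_x (f x)%:E = \int[mu]_(x in `[(- L)%R, L]) (f x)%:E)%E.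
Proof.
move=> fL; rewrite [RHS]integral_mkcond; apply: eq_integral => x _.
rewrite /patch; case: ifPn => // /negP xL.
rewrite fL //; apply: contrapT => /negP; rewrite -leNgt => xL'; apply: xL.
by rewrite inE /= in_itv /= -ler_norml.
Qed.

Lemma rint_dilate (g : R -> R) (eps L : R) : 0 < eps -> continuous g ->
  (forall x, L < `|x| -> g x = 0) ->
  rint (fun x => eps^-1 * g (eps^-1 * x)) = rint g.
Proof.
move=> e0 cg; wlog L0 : L / 0 < L => [hwlog gL|gL].
  apply: (hwlog (`|L| + 1)); first by rewrite ltr_pwDr.
  move=> x xL; apply: gL; apply: le_lt_trans xL.
  by rewrite (le_trans (ler_norm L)) ?lerDl.
pose F x : R := eps^-1 * x.
have dF : derive1 F = cst eps^-1 by apply/funext => x; rewrite (derivable_mulr _ _).2.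
have FN : F (- (L * eps)) = - L by rewrite /F mulrN mulrCA mulVf ?mulr1 ?gt_eqF.
have FP : F (L * eps) = L by rewrite /F mulrCA mulVf ?mulr1 ?gt_eqF.
have cF : continuous F := @scaler_continuous _ R^o eps^-1.
have subst : (\int[mu]_(x in `[(- L)%R, L]) (g x)%:E =
      \int[mu]_(x in `[(- (L * eps))%R, (L * eps)%R]) (((g \o F) * cst eps^-1)%R x)%:E)%E.
  have := @integration_by_substitution_increasing R F g (- (L * eps)) (L * eps).
  rewrite FN FP dF; apply.
  - by have := mulr_gt0 L0 e0; lra.
  - by move=> x y _ _ xy; rewrite /F ltr_pM2l ?invr_gt0.
  - by move=> x _; apply: cst_continuous.
  - exact: is_cvg_cst.
  - exact: is_cvg_cst.
  - split; first by move=> x _; exact: (derivable_mulr _ _).1.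
    + exact: cvg_at_right_filter (cF _).
    + exact: cvg_at_left_filter (cF _).
  - exact: continuous_subspaceT.
rewrite /rint /Rintegral; congr fine.
rewrite [RHS](integralT_itv_supp (L := L)) // subst.
rewrite (integralT_itv_supp (L := L * eps)); last first.
  move=> x xL; rewrite gL ?mulr0 // normrM gtr0_norm ?invr_gt0 //.
  by rewrite mulrC ltr_pdivlMr.
by apply: eq_integral => x _; rewrite /= mulrC.
Qed.

End dilation.

Section scale_eps_A0.
Context {R : realType}.

Definition scale_eps1 (phi : R -> R[i]) (eps : R) : R -> R[i] :=
  fun x => ((eps^-1)%:C)%C * phi (eps^-1 * x).

Lemma Re_scale_eps1 (phi : R -> R[i]) (eps : R) :
  (fun x => complex.Re (scale_eps1 phi eps x)) =
  (fun x => eps^-1 * complex.Re (phi (eps^-1 * x))).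
Proof.
by apply/funext => x; rewrite /scale_eps1; case: (phi _) => a b /=; rewrite mul0r subr0.
Qed.

Lemma Im_scale_eps1 (phi : R -> R[i]) (eps : R) :
  (fun x => complex.Im (scale_eps1 phi eps x)) =
  (fun x => eps^-1 * complex.Im (phi (eps^-1 * x))).
Proof.
by apply/funext => x; rewrite /scale_eps1; case: (phi _) => a b /=; rewrite mul0r addr0.
Qed.

Lemma test_fun1_scale_eps1 (phi : R -> R[i]) (eps : R) :
  0 < eps -> test_fun1 phi -> test_fun1 (scale_eps1 phi eps).
Proof.
move=> e0 [sRe [sIm [L phiL]]]; split; [|split].
- by rewrite Re_scale_eps1; apply: smooth1_dilate (fun z => complex.Re (phi z)) _ _ sRe.
- by rewrite Im_scale_eps1; apply: smooth1_dilate (fun z => complex.Im (phi z)) _ _ sIm.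
- exists (L * eps) => x xL; rewrite /scale_eps1 phiL ?mulr0 //.
  by rewrite normrM gtr0_norm ?invr_gt0 // mulrC ltr_pdivlMr.
Qed.

Lemma cint_scale_eps1 (phi : R -> R[i]) (eps : R) :
  0 < eps -> test_fun1 phi -> cint (scale_eps1 phi eps) = cint phi.
Proof.
move=> e0 [sRe [sIm [L phiL]]]; rewrite /cint Re_scale_eps1 Im_scale_eps1.
have supp_ReIm (f : R[i] -> R) : f 0 = 0 -> forall x, L < `|x| -> f (phi x) = 0.
  by move=> f0 x /phiL ->.
have Re_supp := supp_ReIm _ (erefl : complex.Re 0 = 0).
have Im_supp := supp_ReIm _ (erefl : complex.Im 0 = 0).
by rewrite (rint_dilate e0 (smooth1_continuous sRe) Re_supp)
  (rint_dilate e0 (smooth1_continuous sIm) Im_supp).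
Qed.

Lemma A1_0_scale_eps1 (phi : R -> R[i]) (eps : R) :
  0 < eps -> A1 0 phi -> A1 0 (scale_eps1 phi eps).
Proof.
move=> e0 [tphi [int1 _]]; split; first exact: test_fun1_scale_eps1.
by split=> [|j /andP[j1 j0]]; [rewrite cint_scale_eps1|move: (leq_trans j1 j0)].
Qed.

Lemma tensor_scale_eps n (phi : R -> R[i]) (eps : R) :
  scale_eps (tensor (n:=n) phi) eps = tensor (n:=n) (scale_eps1 phi eps).
Proof.
apply/funext => x; rewrite /scale_eps /tensor /scale_eps1 big_split /= prodr_const card_ord.
by congr (_ * _); [rewrite -exprVn rmorphXn | apply: eq_bigr => i _; rewrite mxE].
Qed.

Lemma An_0_scale_eps n (Phi : 'rV[R]_n -> R[i]) (eps : R) :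
  0 < eps -> An n 0 Phi -> An n 0 (scale_eps Phi eps).
Proof.
move=> e0 [phi [hphi ->]]; exists (scale_eps1 phi eps).
by split; [exact: A1_0_scale_eps1 | exact: tensor_scale_eps].
Qed.

End scale_eps_A0.

Section box_integrals.
Context {R : realType}.
Local Notation mu := (@lebesgue_measure R).

(* No measurability is needed: [ge0_integralTE] writes both sides as suprema
   over simple minorants. *)
Lemma le_nnintegralT (F G : R -> \bar R) :
  (forall x, 0 <= F x)%E -> (forall x, 0 <= G x)%E -> (forall x, F x <= G x)%E ->
  (\int[mu]_x F x <= \int[mu]_x G x)%E.
Proof.
move=> F0 G0 FG; rewrite !ge0_integralTE //; apply: ereal_sup_le => _ [h hF <-].
by exists h => //= x; apply: le_trans (hF x) (FG x).
Qed.

Lemma integral_funepos_le (h : R -> R) (L B : R) : 0 <= L -> 0 <= B ->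
  (forall t, `|h t| <= B) -> (forall t, L < `|t| -> h t = 0) ->
  (\int[mu]_x ((EFin \o h)^\+ x) <= (B * (L + L))%:E)%E.
Proof.
move=> L0 B0 hB hL.
have box : (\int[mu]_x ((cst B%:E) \_ `[(- L)%R, L] x) = (B * (L + L))%:E)%E.
  rewrite -integral_mkcond integral_cst //.
  rewrite [X in (_ * X)%E](lebesgue_measure_itv `[(- L)%R, L]) /= lte_fin.
  have [LL|LL] := ltP (- L) L; first by rewrite -EFinM opprK.
  by rewrite mule0 (_ : L = 0) ?addr0 ?mulr0 //; lra.
rewrite -box; apply: le_nnintegralT => x.
- by rewrite funeposE le_max lexx orbT.
- by rewrite /patch; case: ifP => // _; rewrite lee_fin.
rewrite funeposE /patch /=; case: ifPn => xL.
  by rewrite ge_max !lee_fin (le_trans (ler_norm _) (hB x)) B0.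
rewrite hL ?maxxx //; rewrite ltNge; apply: contra xL => xL.
by rewrite inE /= in_itv /= -ler_norml.
Qed.

Lemma rint_bound (h : R -> R) (L B : R) : 0 <= L -> 0 <= B ->
  (forall t, `|h t| <= B) -> (forall t, L < `|t| -> h t = 0) ->
  `|rint h| <= (L + L) * B.
Proof.
move=> L0 B0 hB hL; rewrite /rint /Rintegral integralE.
have hN : forall t, `|- h t| <= B by move=> t; rewrite normrN.
have hNL : forall t, L < `|t| -> - h t = 0 by move=> t /hL ->; rewrite oppr0.
have -> : (\int[mu]_(x in setT) (EFin \o h)^\- x = \int[mu]_x (EFin \o -%R \o h)^\+ x)%E.
  by rewrite -funeposN.
have pos_bound (k : R -> R) : (forall t, `|k t| <= B) -> (forall t, L < `|t| -> k t = 0) ->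
    (0 <= \int[mu]_x (EFin \o k)^\+ x <= (B * (L + L))%:E)%E.
  move=> kB kL; rewrite integral_funepos_le // andbT.
  by apply: integral_ge0 => x _; rewrite funeposE le_max lexx orbT.
have /andP[P0 PB] := pos_bound h hB hL.
have /andP[N0 NB] := pos_bound (-%R \o h) hN hNL.
move: P0 PB N0 NB; set P := (\int[mu]_x _)%E; set N := (\int[mu]_x _)%E.
move=> P0 PB N0 NB.
have Pfin : P \is a fin_num by rewrite ge0_fin_numE // (le_lt_trans PB) // ltry.
have Nfin : N \is a fin_num by rewrite ge0_fin_numE // (le_lt_trans NB) // ltry.
have p1 : fine P <= (L + L) * B by rewrite mulrC -lee_fin fineK.
have n1 : fine N <= (L + L) * B by rewrite mulrC -lee_fin fineK.
have p0 := fine_ge0 P0; have n0 := fine_ge0 N0.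
rewrite fineB // ler_norml; apply/andP; split; lra.
Qed.

Lemma intn_bound n (g : 'rV[R]_n -> R) (L B : R) : 0 <= L -> 0 <= B ->
  (forall x, `|g x| <= B) ->
  (forall (x : 'rV[R]_n) (i : 'I_n), L < `|x ord0 i| -> g x = 0) ->
  `|intn g| <= (L + L) ^+ n * B.
Proof.
move=> L0; elim: n g B => [|n IH] g B B0 gB gL; first by rewrite expr0 mul1r; exact: gB.
have B'0 : 0 <= (L + L) ^+ n * B by rewrite mulr_ge0 // exprn_ge0 // addr_ge0.
rewrite exprS -mulrA; apply: rint_bound => // t.
  apply: IH => // y i yL; apply: (gL _ (rshift 1 i)).
  by rewrite (row_mxEr (\row_(j < 1) t) y ord0 i).
move=> tL; apply/eqP; rewrite -normr_le0 -(mulr0 ((L + L) ^+ n)); apply: IH => //.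
  move=> y; rewrite (gL _ (lshift n (ord0 : 'I_1))) ?normr0 //.
  by rewrite (row_mxEl (\row_(j < 1) t) y ord0 ord0) mxE.
move=> y i yL; apply: (gL _ (rshift 1 i)).
by rewrite (row_mxEr (\row_(j < 1) t) y ord0 i).
Qed.

End box_integrals.

Section origin.
Context {R : realType}.

Lemma Re_le_cabs (z : R[i]) : `|complex.Re z| <= cabs z.
Proof.
case: z => a b; rewrite /cabs /= -sqrtr_sqr ler_sqrt ?lerDl ?sqr_ge0 //.
by rewrite addr_ge0 ?sqr_ge0.
Qed.

Lemma Im_le_cabs (z : R[i]) : `|complex.Im z| <= cabs z.
Proof.
case: z => a b; rewrite /cabs /= -sqrtr_sqr ler_sqrt ?lerDr ?sqr_ge0 //.
by rewrite addr_ge0 ?sqr_ge0.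
Qed.

Lemma cabs_le_ReIm (a b : R) : cabs (a +i* b)%C <= `|a| + `|b|.
Proof.
have ab0 : 0 <= `|a| + `|b| by rewrite addr_ge0.
rewrite /cabs /= -(ger0_norm ab0) -sqrtr_sqr ler_sqrt ?sqr_ge0 //.
rewrite -[a ^+ 2]real_normK ?num_real // -[b ^+ 2]real_normK ?num_real //.
by rewrite sqrrD -addrA [_ *+ 2 + _]addrC addrA lerDl mulrn_wge0 // mulr_ge0.
Qed.

Lemma FT_at0 n (f : 'rV[R]_n -> R[i]) :
  FT f 0 = (intn (fun x => complex.Re (f x)) +i* intn (fun x => complex.Im (f x)))%C.
Proof.
have f0 x : cexpi (- dotp x 0) * f x = f x.
  rewrite /dotp big1 => [|i _]; last by rewrite mxE mulr0.
  by rewrite oppr0 /cexpi cos0 sin0 mul1r.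
by rewrite /FT; congr (_ +i* _)%C; congr intn; apply/funext => x; rewrite f0.
Qed.

Lemma enorm0 n : enorm (0 : 'rV[R]_n) = 0.
Proof. by rewrite /enorm /dotp big1 ?sqrtr0 // => i _; rewrite mxE mulr0. Qed.

Lemma cabs_FT0_le n (f : 'rV[R]_n -> R[i]) (L B : R) : 0 <= L -> 0 <= B ->
  (forall x, cabs (f x) <= B) ->
  (forall (x : 'rV[R]_n) (i : 'I_n), L < `|x ord0 i| -> f x = 0) ->
  cabs (FT f 0) <= (L + L) ^+ n * B *+ 2.
Proof.
move=> L0 B0 fB fL; rewrite FT_at0 mulr2n; apply: le_trans (cabs_le_ReIm _ _) _.
by apply: lerD; apply: intn_bound => // [x|x i /fL ->//];
  [exact: le_trans (Re_le_cabs _) (fB x) | exact: le_trans (Im_le_cabs _) (fB x)].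
Qed.

Lemma norm_entry_le n (x : 'rV[R]_n) i : `|x ord0 i| <= `|x|.
Proof.
have -> : `|x| = mx_norm x by []; rewrite mx_normrE.
exact: (le_bigmax _ (fun ij : 'I_1 * 'I_n => `|x ij.1 ij.2|) (ord0, i)).
Qed.

Lemma cdmulti0 n (f : 'rV[R]_n -> R[i]) x : cdmulti (fun _ => 0%N) f x = f x.
Proof.
have d0 (g : 'rV[R]_n -> R) : dmulti (fun _ => 0%N) g = g.
  by rewrite /dmulti; elim: (enum 'I_n).
by rewrite /cdmulti !d0; case: (f x).
Qed.

Lemma micro_estimate_origin n (Om : set 'rV[R]_n)
    (u : ('rV[R]_n -> R[i]) -> 'rV[R]_n -> R[i]) :
  moderate Om u -> compactly_supported Om u -> micro_estimate Om u [set 0].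
Proof.
move=> [_ u_mod] [K [cK [KOm u_supp]]].
have [N uN] := u_mod K cK KOm (fun _ => 0%N).
have [L [L0 KL]] : exists L : R, 0 <= L /\ forall x, K x -> `|x| <= L.
  have [M [_ KM]] := compact_bounded cK; exists (`|M| + 1).
  split=> [|x Kx]; first by rewrite addr_ge0.
  by apply: KM => //; rewrite (le_lt_trans (ler_norm M)) // ltrDl.
exists N => p; exists N => Phi PhiN.
have [c [eta [c0 [eta0 u_bound]]]] := uN Phi PhiN.
exists (((L + L) ^+ n *+ 2 + 1) * c), eta; split.
  by rewrite mulr_gt0 // ltr_wpDl // mulrn_wge0 // exprn_ge0 // addr_ge0.
split=> // _ -> eps /[dup] /andP[e0 _] eps_eta.
pose f := ext0 Om (u (scale_eps Phi eps)).
have fK x : ~ K x -> f x = 0.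
  move=> Kx; rewrite /f /ext0; case: ifPn => // /set_mem Omx.
  exact: u_supp (An_0_scale_eps e0 (An_le (leq0n N) PhiN)) x Omx Kx.
have E0 : 0 <= c * eps ^- N by rewrite mulr_ge0 ?invr_ge0 ?exprn_ge0 // ltW.
have fB x : cabs (f x) <= c * eps ^- N.
  have [Kx|Kx] := pselect (K x); last by rewrite fK // /cabs /= expr0n addr0 sqrtr0.
  have := u_bound eps eps_eta x Kx; rewrite cdmulti0.
  by rewrite /f /ext0 ifT //; apply/mem_set/KOm.
have fL (x : 'rV[R]_n) i : L < `|x ord0 i| -> f x = 0.
  move=> xL; apply: fK => Kx; move: xL; rewrite ltNge => /negP; apply.
  exact: le_trans (norm_entry_le x i) (KL x Kx).
apply: le_trans (cabs_FT0_le L0 E0 fB fL) _.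
rewrite enorm0 addr0 expr1n invr1 mulr1.
have -> : ((L + L) ^+ n *+ 2 + 1) * c * eps ^- N =
    (L + L) ^+ n * (c * eps ^- N) *+ 2 + c * eps ^- N by ring.
by rewrite lerDl.
Qed.

End origin.

Section away_from_origin.
Context {R : realType} (n : nat) (Om : set 'rV[R]_n).
Variable u : ('rV[R]_n -> R[i]) -> 'rV[R]_n -> R[i].

Lemma closed_unit_sphere : closed [set x : 'rV[R]_n | `|x| = 1].
Proof.
have -> : [set x : 'rV[R]_n | `|x| = 1] = (@Num.norm _ _) @^-1` [set 1] by [].
by apply: (continuous_closedP _).1; [exact: norm_continuous | exact: closed_eq].
Qed.

Lemma compact_cone_sphere (Gam : set 'rV[R]_n) :
  (forall xi, xi != 0 -> closure Gam xi -> Gam xi) ->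
  compact (Gam `&` [set x | `|x| = 1]).
Proof.
move=> Gam_cl; apply: bounded_closed_compact.
  by exists 1; split=> // M M1 x [_ /= ->]; exact: ltW.
move=> x /closureI[clGx]; rewrite -(proj1 (closure_id _) closed_unit_sphere) => x1.
by split=> //; apply: Gam_cl => //; rewrite -normr_eq0 x1 oner_neq0.
Qed.

Lemma micro_estimate_compact_cover (S : set 'rV[R]_n) : compact S ->
  (forall x, S x -> exists G, [/\ open G, is_cone G, G x & micro_estimate Om u G]) ->
  exists G, [/\ is_cone G, S `<=` G & micro_estimate Om u G].
Proof.
move=> cS Sloc.
pose D := [set G : set 'rV[R]_n | open G /\ is_cone G /\ micro_estimate Om u G].
have S_D : S `<=` cover D id.
  by move=> x /Sloc[G [oG cG Gx mG]]; exists G.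
rewrite compact_cover in cS.
have [D' D'D SD'] := cS _ D id (fun G DG => proj1 DG) S_D.
exists [set x | exists2 G, G \in finmap.enum_fset D' & G x]; split.
- move=> x lam [G GD' Gx] lam0; exists G => //.
  by have /set_mem [_ [cG _]] := D'D G GD'; exact: cG.
- by move=> x /SD'[G GD' Gx]; exists G.
- by apply: micro_estimate_bigcup => G /D'D /set_mem[_ []].
Qed.

Lemma micro_estimate_cone_setD0 (Gam : set 'rV[R]_n) :
  is_cone Gam -> (forall xi, xi != 0 -> closure Gam xi -> Gam xi) ->
  Gam `<=` ~` SigmaG Om u -> micro_estimate Om u (Gam `\ 0).
Proof.
move=> Gam_cone Gam_cl Gam_reg.
have sphere_loc x : (Gam `&` [set x | `|x| = 1]) x ->
    exists G, [/\ open G, is_cone G, G x & micro_estimate Om u G].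
  move=> [Gx x1]; have x0 : x != 0 by rewrite -normr_eq0 x1 oner_neq0.
  apply: contrapT => noG; apply: (Gam_reg x Gx); split=> // -[G [oG [cG [Gx' mG]]]].
  by apply: noG; exists G.
have [G [G_cone SG mG]] :=
  micro_estimate_compact_cover (compact_cone_sphere Gam_cl) sphere_loc.
apply: micro_estimate_sub mG => xi [Gxi /eqP xi0].
have nxi : 0 < `|xi| by rewrite normr_gt0.
have -> : xi = `|xi| *: (`|xi|^-1 *: xi) by rewrite scalerA mulfV ?lt0r_neq0 ?scale1r.
apply: (G_cone _ _ (SG _ _) nxi); split.
  by apply: (Gam_cone _ _ Gxi); rewrite invr_gt0.
by rewrite /= normrZ normfV normr_id mulVf // lt0r_neq0.
Qed.

End away_from_origin.

Unset Implicit Arguments.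
Set Strict Implicit.

Theorem mainTheorem2 (R : realType) (n : nat) (Om : set 'rV[R]_n)
    (u : ('rV[R]_n -> R[i]) -> 'rV[R]_n -> R[i]) (Gam : set 'rV[R]_n) :
  open Om ->
  moderate Om u ->
  compactly_supported Om u ->
  is_cone Gam ->
  (forall xi : 'rV[R]_n, xi != 0 -> closure Gam xi -> Gam xi) ->
  Gam `<=` ~` SigmaG Om u ->
  exists N : nat, forall p : nat, exists M : nat,
  forall Phi : 'rV[R]_n -> R[i], An n M Phi ->
  exists c eps0 : R, 0 < c /\ 0 < eps0 /\
  forall (xi : 'rV[R]_n) (eps : R), Gam xi -> 0 < eps < eps0 ->
    cabs (FT (ext0 Om (u (scale_eps Phi eps))) xi)
      <= c * eps ^- N * (1 + enorm xi) ^- p.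
Proof.
move=> _ u_mod u_supp Gam_cone Gam_cl Gam_reg.
have [N uN] : micro_estimate Om u Gam.
  apply: micro_estimate_sub (micro_estimate_setU
    (micro_estimate_cone_setD0 Gam_cone Gam_cl Gam_reg)
    (micro_estimate_origin u_mod u_supp)).
  by move=> xi Gxi; have [->|/eqP xi0] := eqVneq xi 0; [right|left].
exists N => p; have [M uM] := uN p; exists M => Phi PhiM.
have [c [eps0 [c0 [eps00 est]]]] := uM Phi PhiM.
by exists c, eps0; do 2 split=> //; move=> xi eps Gxi; exact: est.
Qed.
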